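(* Let $P$ and $Q$ be probability distributions on a nonempty set $\mathcal{X}\subseteq\mathbb{R}^d$ and let $c\in(0,1)$. Let $\mathcal{F}$ be the set of measurable functions $h:\mathcal{X}\to\mathbb{R}$ with $\mathbb{E}_{X\sim P}[h(X)^2]<\infty$ and $\mathbb{E}_{Y\sim Q}[h(Y)^2]<\infty$. Assume $L_{P,Q,c}(h)>0$ for every $h\in\mathcal{F}$. Suppose $h^*\in\mathcal{F}$ minimizes the squared loss, i.e. $L_{P,Q,c}(h^* )=\min_{h\in\mathcal{F}}L_{P,Q,c}(h)$, and $\sigma_c(h^* )>0$. Then $h^*$ maximizes the signal-to-noise ratio: $\mathrm{SNR}(h^* )\ge \mathrm{SNR}(h)$ for every $h\in\mathcal{F}$ with $\sigma_c(h)>0$.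
   Context: For $h\in\mathcal{F}$ define: $\tau(P,Q\mid h)=\mathbb{E}_{X\sim P}[h(X)]-\mathbb{E}_{Y\sim Q}[h(Y)]$; $\sigma_c^2(h)=\dfrac{(1-c)\,\mathrm{Var}_{X\sim P}[h(X)]+c\,\mathrm{Var}_{Y\sim Q}[h(Y)]}{c(1-c)}$ with $\sigma_c(h)\ge0$; $\mathrm{SNR}(h)=\tau(P,Q\mid h)/\sigma_c(h)$ (defined when $\sigma_c(h)>0$); and $L_{P,Q,c}(h)=(1-c)\,\mathbb{E}_{X\sim P}[(1-h(X))^2]+c\,\mathbb{E}_{Y\sim Q}[h(Y)^2]$. *)

From mathcomp Require Import all_boot all_order all_algebra.
From mathcomp Require Import all_classical all_reals all_analysis.
Import numFieldNormedType.Exports.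
Set Implicit Arguments. Unset Strict Implicit. Unset Printing Implicit Defensive.
Import Order.TTheory GRing.Theory Num.Theory.
Local Open Scope classical_set_scope.
Local Open Scope ring_scope.

(* R^d = row vectors 'rV[R]_d, equipped with its Borel sigma-algebra
   (the sigma-algebra generated by the open sets of its product topology). *)
Definition borelRd (R : realType) (d : nat) :=
  g_sigma_algebraType (@open 'M[R]_(1, d)).

Section defs.
Context (R : realType) (d : nat).
Let T := borelRd R d.
Context (X : set T) (P Q : probability T R) (c : R).

(* E_{Z ~ mu}[f(Z)] for a distribution mu on X (real-valued; only used for
   functions in the class F, where it is finite). *)
Definition Ex (mu : probability T R) (f : T -> R) : R := Rintegral mu X f.

Definition Var (mu : probability T R) (f : T -> R) : R :=
  Ex mu (fun x => (f x - Ex mu f) ^+ 2).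

Definition inF (h : T -> R) : Prop :=
  measurable_fun X h /\
  (\int[P]_(x in X) ((h x) ^+ 2)%:E < +oo)%E /\
  (\int[Q]_(x in X) ((h x) ^+ 2)%:E < +oo)%E.

Definition tau (h : T -> R) : R := Ex P h - Ex Q h.

Definition sigma2 (h : T -> R) : R :=
  ((1 - c) * Var P h + c * Var Q h) / (c * (1 - c)).

Definition sigma (h : T -> R) : R := Num.sqrt (sigma2 h).

Definition SNR (h : T -> R) : R := tau h / sigma h.

Definition Lsq (h : T -> R) : R :=
  (1 - c) * Ex P (fun x => (1 - h x) ^+ 2) + c * Ex Q (fun x => (h x) ^+ 2).

End defs.

From mathcomp Require Import all_boot all_order all_algebra.
From mathcomp Require Import all_classical all_reals all_analysis.
From mathcomp Require Import ring lra measurable_realfun.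
Import numFieldNormedType.Exports.
Import Order.TTheory GRing.Theory Num.Theory.
Local Open Scope classical_set_scope.
Local Open Scope ring_scope.

(* For g in F, every affine map a + b g is again in F, and L(a + b g) is an
   explicit quadratic in (a, b) depending on g only through tau(g) and
   sigma_c^2(g); its minimum is c(1-c) / (1 + SNR(g)^2).  Hence the minimizer
   hs satisfies L(hs) <= c(1-c) / (1 + SNR(h)^2) for every h, while L(hs) is
   at least the minimum over its own affine family, c(1-c) / (1 + SNR(hs)^2).
   So SNR(h)^2 <= SNR(hs)^2.  Finally tau(hs) > 0: with slope b = 1 and
   tau(hs) <= 0 the loss would exceed c(1-c), an upper bound of the minimum. *)

Section affine_loss.
Context {R : realFieldType}.
Implicit Types c t s u b : R.

(* [affine_loss c t s u b] is [L(a + b g)] for [t = tau g],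
   [s = sigma_c^2 g] and [u = E_Q(a + b g)]; see [Lsq_affine] below. *)
Definition affine_loss c t s u b :=
  (1 - c) * (1 - u - b * t) ^+ 2 + c * u ^+ 2 + c * (1 - c) * s * b ^+ 2.

Definition min_affine_loss c t s := c * (1 - c) * s / (t ^+ 2 + s).

Lemma affine_loss_E c t s u b : affine_loss c t s u b =
  c * (1 - c) * ((1 - b * t) ^+ 2 + s * b ^+ 2) + (u - (1 - c) * (1 - b * t)) ^+ 2.
Proof. by rewrite /affine_loss; ring. Qed.

Lemma affine_loss_min_E c t s u b : t ^+ 2 + s != 0 ->
  affine_loss c t s u b = min_affine_loss c t s
    + c * (1 - c) * ((t ^+ 2 + s) * b - t) ^+ 2 / (t ^+ 2 + s)
    + (u - (1 - c) * (1 - b * t)) ^+ 2.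
Proof. by move=> D_neq0; rewrite affine_loss_E /min_affine_loss; field. Qed.

Section positive_noise.
Context {c t s : R}.
Hypotheses (c01 : 0 < c < 1) (s_gt0 : 0 < s).

Let k_gt0 : 0 < c * (1 - c).
Proof. by case/andP: c01 => c0 c1; rewrite mulr_gt0 ?subr_gt0. Qed.

Let D_gt0 : 0 < t ^+ 2 + s.
Proof. by rewrite ltr_wpDl ?sqr_ge0. Qed.

Lemma min_affine_loss_le u b : min_affine_loss c t s <= affine_loss c t s u b.
Proof.
rewrite affine_loss_min_E ?gt_eqF // -addrA lerDl.
by rewrite addr_ge0 ?sqr_ge0 // divr_ge0 ?(ltW D_gt0) // mulr_ge0 ?sqr_ge0 ?(ltW k_gt0).
Qed.

Lemma min_affine_loss_attained : exists u b,
  affine_loss c t s u b = min_affine_loss c t s.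
Proof.
pose b := t / (t ^+ 2 + s); exists ((1 - c) * (1 - b * t)), b.
rewrite affine_loss_min_E ?gt_eqF // subrr expr0n /= addr0.
have -> : (t ^+ 2 + s) * b = t by rewrite /b mulrCA mulfV ?gt_eqF ?mulr1.
by rewrite subrr expr0n /= mulr0 mul0r addr0.
Qed.

Lemma min_affine_loss_le_const : min_affine_loss c t s <= c * (1 - c).
Proof.
rewrite /min_affine_loss ler_pdivrMr // ler_pM2l //.
by rewrite lerDr sqr_ge0.
Qed.

Lemma unit_slope_optimal_gt0 u :
  affine_loss c t s u 1 <= min_affine_loss c t s -> 0 < t.
Proof.
move=> opt; have := le_trans opt min_affine_loss_le_const.
rewrite affine_loss_E mul1r expr1n mulr1 => le_k.
have : (1 - t) ^+ 2 + s <= 1.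
  rewrite -(ler_pM2l k_gt0) mulr1; apply: le_trans le_k.
  by rewrite lerDl sqr_ge0.
move: s_gt0; nra.
Qed.

End positive_noise.
End affine_loss.

Lemma snr_le_of_min_affine_loss_le {R : rcfType} {c t s t' s' : R} :
  0 < c < 1 -> 0 < s -> 0 < s' -> 0 < t' ->
  min_affine_loss c t' s' <= min_affine_loss c t s ->
  t / Num.sqrt s <= t' / Num.sqrt s'.
Proof.
move=> /andP[c_gt0 c_lt1] s_gt0 s'_gt0 t'_gt0.
have k_gt0 : 0 < c * (1 - c) by rewrite mulr_gt0 ?subr_gt0.
have D_gt0 (x y : R) : 0 < y -> 0 < x ^+ 2 + y by exact: ltr_wpDl (sqr_ge0 x).
rewrite /min_affine_loss -!(mulrA (c * (1 - c))) (ler_pM2l k_gt0).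
rewrite ler_pdivrMr ?D_gt0 // mulrAC ler_pdivlMr ?D_gt0 // => cross.
have sq_le : (t * Num.sqrt s') ^+ 2 <= (t' * Num.sqrt s) ^+ 2.
  by rewrite !exprMn !sqr_sqrtr ?(ltW s_gt0) ?(ltW s'_gt0); lra.
have rs_gt0 : 0 < Num.sqrt s by rewrite sqrtr_gt0.
have rs'_gt0 : 0 < Num.sqrt s' by rewrite sqrtr_gt0.
have [t_le0|t_gt0] := lerP t 0.
  by apply: le_trans (divr_ge0 (ltW t'_gt0) (ltW rs'_gt0)); rewrite pmulr_lle0 ?invr_gt0.
rewrite ler_pdivrMr // mulrAC ler_pdivlMr //.
by rewrite -ler_sqr // nnegrE mulr_ge0 ?sqrtr_ge0 ?ltW.
Qed.

Definition sq_integrable {d} {T : measurableType d} {R : realType}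
    (mu : {measure set T -> \bar R}) (D : set T) (f : T -> R) :=
  mu.-integrable D (EFin \o f) /\ mu.-integrable D (EFin \o (fun x => f x ^+ 2)).

Section square_integrable.
Context {d : measure_display} {T : measurableType d} {R : realType} {D : set T}.
Hypothesis mD : measurable D.

Lemma ge0_integrable (mu : {measure set T -> \bar R}) (f : T -> R) :
  measurable_fun D f -> (forall x, D x -> 0 <= f x) ->
  (\int[mu]_(x in D) (f x)%:E < +oo)%E -> mu.-integrable D (EFin \o f).
Proof.
move=> mf f_ge0 f_lty; apply/integrableP; split; first exact/measurable_EFinP.
rewrite (le_lt_trans _ f_lty)//; apply: ge0_le_integral => //.
- by apply: measurableT_comp => //; exact/measurable_EFinP.
- exact/measurable_EFinP.
- by move=> x Dx /=; rewrite ger0_norm ?f_ge0.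
Qed.

Lemma integrable_of_sqr (mu : {finite_measure set T -> \bar R}) (f : T -> R) :
  measurable_fun D f -> mu.-integrable D (EFin \o (fun x => f x ^+ 2)) ->
  mu.-integrable D (EFin \o f).
Proof.
move=> mf f2_int.
have : mu.-integrable D (EFin \o (fun x => 1 + f x ^+ 2)).
  have := integrableD mD (finite_measure_integrable_cst mu 1 mD) f2_int.
  by apply: eq_integrable => // x _ /=; rewrite EFinD.
apply: le_integrable => //; first exact/measurable_EFinP.
move=> x _ /=; rewrite lee_fin [leRHS]ger0_norm ?addr_ge0 ?sqr_ge0 //.
rewrite -real_normK ?num_real //.
have := normr_ge0 (f x); have := sqr_ge0 (`|f x| - 1); nra.
Qed.

Lemma integrable_quadratic (mu : {finite_measure set T -> \bar R}) (f : T -> R)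
    (p0 p1 p2 : R) : sq_integrable mu D f ->
  mu.-integrable D (EFin \o (fun x => p0 + p1 * f x + p2 * f x ^+ 2)).
Proof.
move=> [f_int f2_int].
have := integrableD mD (integrableD mD (finite_measure_integrable_cst mu p0 mD)
  (integrableZl mD p1 f_int)) (integrableZl mD p2 f2_int).
by apply: eq_integrable => // x _ /=; rewrite !EFinD !EFinM.
Qed.

Lemma Rintegral_quadratic (mu : probability T R) (f : T -> R) (p0 p1 p2 : R) :
  mu D = 1%E -> sq_integrable mu D f ->
  \int[mu]_(x in D) (p0 + p1 * f x + p2 * f x ^+ 2) =
  p0 + p1 * \int[mu]_(x in D) f x + p2 * \int[mu]_(x in D) (f x ^+ 2).
Proof.
move=> muD [f_int f2_int].
have mul_int g k : mu.-integrable D (EFin \o g) ->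
    mu.-integrable D (EFin \o (fun x => k * g x)).
  by move=> g_int; apply: eq_integrable (integrableZl mD k g_int) => // x _ /=;
    rewrite EFinM.
have cst_int := finite_measure_integrable_cst mu p0 mD.
have affine_int : mu.-integrable D (EFin \o (fun x => p0 + p1 * f x)).
  by apply: eq_integrable (integrableD mD cst_int (mul_int _ p1 f_int)) => // x _ /=;
    rewrite EFinD.
rewrite !RintegralD ?mul_int // Rintegral_cst // !RintegralZl //.
have -> : fine (mu D) = 1 by exact: (congr1 fine muD).
by rewrite mulr1.
Qed.

End square_integrable.

Section squared_loss.
Context {R : realType} {d : nat} {X : set (borelRd R d)}.
Context {P Q : probability (borelRd R d) R} {c : R}.
Hypotheses (mX : measurable X) (PX : P X = 1%E) (QX : Q X = 1%E).
Hypothesis c01 : 0 < c < 1.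

Local Notation inF := (inF X P Q).
Local Notation Lsq := (Lsq X P Q c).
Local Notation tau := (tau X P Q).
Local Notation sigma2 := (sigma2 X P Q c).

Lemma inF_sq_integrable g : inF g -> sq_integrable P X g /\ sq_integrable Q X g.
Proof.
move=> [mg [g2P g2Q]].
have mg2 : measurable_fun X (fun x => g x ^+ 2) by exact: measurable_funX.
have sq_int_of_lty (mu : probability _ R) :
    (\int[mu]_(x in X) (g x ^+ 2)%:E < +oo)%E -> sq_integrable mu X g.
  move=> g2_lty; have g2_int : mu.-integrable X (EFin \o (fun x => g x ^+ 2)).
    by apply: ge0_integrable => // x _; exact: sqr_ge0.
  by split => //; exact: integrable_of_sqr.
by split; apply: sq_int_of_lty.
Qed.

Lemma Ex_quadratic p0 p1 p2 {mu : probability (borelRd R d) R} {g}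
    {F : borelRd R d -> R} : mu X = 1%E -> sq_integrable mu X g ->
  (forall x, F x = p0 + p1 * g x + p2 * g x ^+ 2) ->
  Ex X mu F = p0 + p1 * Ex X mu g + p2 * Ex X mu (fun x => g x ^+ 2).
Proof.
move=> muX g_int eF; rewrite /Ex -Rintegral_quadratic //.
by apply: eq_Rintegral => x _; exact: eF.
Qed.

Lemma Var_E {mu : probability (borelRd R d) R} {g} : mu X = 1%E ->
  sq_integrable mu X g -> Var X mu g = Ex X mu (fun x => g x ^+ 2) - Ex X mu g ^+ 2.
Proof.
move=> muX g_int; rewrite /Var.
rewrite (Ex_quadratic (Ex X mu g ^+ 2) (- 2 * Ex X mu g) 1 muX g_int).
  by ring.
by move=> x; ring.
Qed.

Lemma inF_affine g a b : inF g -> inF (fun x => a + b * g x).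
Proof.
move=> gF; have /inF_sq_integrable[gP gQ] := gF; case: gF => mg _.
have sqr_affine x : (a + b * g x) ^+ 2 = a ^+ 2 + (2 * a * b) * g x + b ^+ 2 * g x ^+ 2.
  by ring.
have sqr_lty (mu : probability _ R) : sq_integrable mu X g ->
    (\int[mu]_(x in X) ((a + b * g x) ^+ 2)%:E < +oo)%E.
  move=> g_int; under eq_integral do rewrite sqr_affine.
  exact/integrable_lty/integrable_quadratic.
split; last by split; apply: sqr_lty.
apply: measurable_funD; first exact: measurable_cst.
by apply: measurable_funM => //; exact: measurable_cst.
Qed.

Lemma Lsq_affine g a b : inF g ->
  Lsq (fun x => a + b * g x) = affine_loss c (tau g) (sigma2 g) (a + b * Ex X Q g) b.
Proof.
move=> /inF_sq_integrable[gP gQ].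
have c0 : c != 0 by case/andP: c01 => c_gt0 _; rewrite gt_eqF.
have c1 : 1 - c != 0 by case/andP: c01 => _ c_lt1; rewrite subr_eq0 gt_eqF.
rewrite /Lsq (Ex_quadratic ((1 - a) ^+ 2) (- 2 * (1 - a) * b) (b ^+ 2) PX gP);
  last by move=> x; ring.
rewrite (Ex_quadratic (a ^+ 2) (2 * a * b) (b ^+ 2) QX gQ); last by move=> x; ring.
rewrite /affine_loss /sigma2 (Var_E PX gP) (Var_E QX gQ) /tau.
by field; rewrite c0 c1.
Qed.

Lemma Lsq_E g : inF g -> Lsq g = affine_loss c (tau g) (sigma2 g) (Ex X Q g) 1.
Proof.
move=> gF; rewrite -[in RHS](add0r (Ex X Q g)) -[in RHS](mul1r (Ex X Q g)) -Lsq_affine //.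
by congr Lsq; apply: funext => x; rewrite add0r mul1r.
Qed.

Lemma exists_Lsq_eq_min_affine_loss g : inF g -> 0 < sigma2 g ->
  exists2 f, inF f & Lsq f = min_affine_loss c (tau g) (sigma2 g).
Proof.
move=> gF s_gt0.
have [u [b opt]] := min_affine_loss_attained (c := c) (t := tau g) s_gt0.
exists (fun x => u - b * Ex X Q g + b * g x); first exact: inF_affine.
by rewrite Lsq_affine // subrK.
Qed.

End squared_loss.

Theorem proposition1 (R : realType) (d : nat) (X : set (borelRd R d))
  (P Q : probability (borelRd R d) R) (c : R) :
  X !=set0 -> measurable X ->
  P X = 1%E -> Q X = 1%E ->
  0 < c < 1 ->
  (forall h, inF X P Q h -> 0 < Lsq X P Q c h) ->
  forall hs : borelRd R d -> R,
  inF X P Q hs ->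
  (forall h, inF X P Q h -> Lsq X P Q c hs <= Lsq X P Q c h) ->
  0 < sigma X P Q c hs ->
  forall h, inF X P Q h -> 0 < sigma X P Q c h ->
    SNR X P Q c h <= SNR X P Q c hs.
Proof.
move=> _ mX PX QX c01 _ hs hsF hs_min + h hF.
rewrite /SNR /sigma !sqrtr_gt0 => s_hs s_h.
have Lsq_le_min g : inF X P Q g -> 0 < sigma2 X P Q c g ->
    Lsq X P Q c hs <= min_affine_loss c (tau X P Q g) (sigma2 X P Q c g).
  move=> gF s_g.
  by have [f fF <-] := exists_Lsq_eq_min_affine_loss mX PX QX c01 _ gF s_g; exact: hs_min.
have Lsq_hs := Lsq_E mX PX QX c01 _ hsF.
have tau_hs_gt0 : 0 < tau X P Q hs.
  by apply: (unit_slope_optimal_gt0 c01 s_hs (Ex X Q hs)); rewrite -Lsq_hs Lsq_le_min.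
apply: (snr_le_of_min_affine_loss_le c01 s_h s_hs tau_hs_gt0).
apply: le_trans (Lsq_le_min h hF s_h); rewrite Lsq_hs; exact: min_affine_loss_le.
Qed.
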